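(* Let $p$ be an odd prime and let $G$ be a finite $p$-solvable group such that every maximal subgroup of $G$ is either $p$-nilpotent or has prime index in $G$. Then ${\bf O}_{p',p,p',p,p'}(G)=G$. In particular, the $p$-length of $G$ satisfies $l_p(G)\le 2$.
   Context: A group is $p$-nilpotent if it has a normal Hall $p'$-subgroup. A maximal subgroup means a maximal proper subgroup. ${\bf O}_{p'}(G)$ is the largest normal $p'$-subgroup and ${\bf O}_p(G)$ the largest normal $p$-subgroup of $G$; the upper $p'p$-series is defined recursively: ${\bf O}_{p',p}(G)$ is the full preimage of ${\bf O}_p(G/{\bf O}_{p'}(G))$, ${\bf O}_{p',p,p'}(G)$ the full preimage of ${\bf O}_{p'}(G/{\bf O}_{p',p}(G))$, and so on alternately. The $p$-length $l_p(G)$ of a $p$-solvable group is the number of $p$-group factors in its upper $p'p$-series (equivalently, the minimal number of $p$-factors in a normal series whose factors are $p$-groups or $p'$-groups). *)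

From mathcomp Require Import all_boot all_fingroup all_solvable.
Set Implicit Arguments. Unset Strict Implicit. Unset Printing Implicit Defensive.
Local Open Scope group_scope.

Section Defs.
Variable gT : finGroupType.

(* Upper pi-series, listed from the top: for pis = [:: pi_1; ...; pi_n],
   useries_rev (rev pis) G = O_{pi_1,...,pi_n}(G), with
   O_{pi_1,...,pi_n}(G) = preimage of O_{pi_n}(G / O_{pi_1,...,pi_(n-1)}(G)). *)
Fixpoint useries_rev (pis : seq nat_pred) (G : {set gT}) : {set gT} :=
  if pis is pi :: pis' then
    let K := useries_rev pis' G in coset K @*^-1 'O_pi(G / K)
  else 1.

Definition useries (pis : seq nat_pred) (G : {set gT}) : {set gT} :=
  useries_rev (rev pis) G.

Definition p_nilpotent (p : nat) (G : {set gT}) : Prop :=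
  exists H : {group gT}, p^'.-Hall(G) H /\ H <| G.

Definition p_solvable (p : nat) (G : {group gT}) : Prop :=
  exists s : seq {group gT},
    last 1%G s = G /\
    path (fun H K : {group gT} =>
            (H <| K) && (p.-group (K / H) || p^'.-group (K / H))) 1%G s.

End Defs.

From mathcomp Require Import all_boot all_fingroup all_solvable.
Set Implicit Arguments. Unset Strict Implicit. Unset Printing Implicit Defensive.
Local Open Scope group_scope.

(** Induct on |G|, the hypotheses passing to quotients. When O_p'(G) = 1 a
  minimal normal subgroup N of G lies in O_p(G), and by induction
  O_{p',p,p',p,p'}(G/N) = G/N. If N <= Phi(G), the Frattini argument for a
  Schur-Zassenhaus complement gives O_p'(G/N) = 1, so G = O_{p,p',p,p'}(G).
  Otherwise N is complemented by a maximal subgroup M. A p-nilpotent M, with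
  normal Hall p'-subgroup H, yields the series 1 <= N <= NH <= G. If instead
  |G : M| is prime, then |N| = p, G/C_G(N) is a p'-group, and
  C_G(N) = N x (M :&: C_G(N)); hence the preimage of O_{p',p}(G/N) meets
  C_G(N) in a normal p-subgroup, which absorbs the bottom p'-layer. *)

Lemma useries_pseries (gT : finGroupType) pis (G : {set gT}) :
  useries pis G = pseries pis G.
Proof. by rewrite /useries /pseries; elim: (rev pis) => //= pi pis' ->. Qed.

Section IndexFacts.
Variable gT : finGroupType.
Implicit Types (pi : nat_pred) (G H K : {group gT}).

Lemma pgroup_setI_quotient pi H K :
  H \subset 'N(K) -> pi.-group (H :&: K) -> pi.-group (H / K) -> pi.-group H.
Proof.
move=> nKH piHK piHK'; rewrite /pgroup -(LagrangeI H K) -card_quotient //.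
by rewrite pnatM; apply/andP.
Qed.

Lemma dvdn_index_normal G H K : K <| G -> H \subset G -> #|H : K| %| #|G : K|.
Proof.
case/andP=> _ nKG sHG; rewrite -!card_quotient ?(subset_trans sHG) //.
by rewrite cardSg ?quotientS.
Qed.

End IndexFacts.

Section UpperSeries.
Variable gT : finGroupType.
Implicit Types (pi : nat_pred) (pis s t : seq nat_pred) (A B G N : {group gT}).

Lemma pseries_rcons_max pis pi G A B :
  A \subset pseries pis G -> A \subset B -> B <| G -> pi.-nat #|B : A| ->
  B \subset pseries (rcons pis pi) G.
Proof.
move=> sAS sAB /andP[sBG nBG] piBA.
have nSB : B \subset 'N(pseries pis G) := subset_trans sBG (gFnorm _ G).
rewrite pseries_rcons /pcore_mod -sub_morphim_pre //.
apply: pcore_max; last by rewrite morphim_normal //; apply/andP.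
rewrite /pgroup card_quotient // -indexgI; apply: pnat_dvd piBA.
by rewrite indexgS // subsetI sAB.
Qed.

Lemma cosetpre_pseries_normal s G N :
  N <| G -> coset N @*^-1 pseries s (G / N) <| G.
Proof.
by move=> nsNG; rewrite -{2}(quotientGK nsNG) cosetpre_normal pseries_normal.
Qed.

Lemma pnat_index_cosetpre_pseries s pi G N :
  pi.-nat #|coset N @*^-1 pseries (rcons s pi) (G / N)
            : coset N @*^-1 pseries s (G / N)|.
Proof.
rewrite index_cosetpre -card_quotient ?pseries_norm2 // quotient_pseries.
exact: pcore_pgroup.
Qed.

Lemma cosetpre_pseries_cat_sub s pis t G N : N <| G ->
  coset N @*^-1 pseries s (G / N) \subset pseries pis G ->
  coset N @*^-1 pseries (s ++ t) (G / N) \subset pseries (pis ++ t) G.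
Proof.
move=> nsNG sKs; elim/last_ind: t => [|t pi IHt]; first by rewrite !cats0.
rewrite -!rcons_cat; apply: pseries_rcons_max IHt _ _ _.
- by rewrite morphpreS // -cats1 pseries_sub_catl.
- exact: cosetpre_pseries_normal.
exact: pnat_index_cosetpre_pseries.
Qed.

Lemma pseries_quotient_lift s pis t G N : N <| G ->
  coset N @*^-1 pseries s (G / N) \subset pseries pis G ->
  pseries (s ++ t) (G / N) = G / N -> pseries (pis ++ t) G = G.
Proof.
move=> nsNG sKs defGN; apply/eqP; rewrite eqEsubset pseries_sub /=.
by rewrite -{1}(quotientGK nsNG) -defGN cosetpre_pseries_cat_sub.
Qed.

Lemma pseries_quotient_pgroup_lift pi t G N : N <| G -> pi.-group N ->
  pseries (pi :: t) (G / N) = G / N -> pseries (pi :: t) G = G.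
Proof.
move=> nsNG piN; apply: (pseries_quotient_lift (s := [:: pi]) (pis := [:: pi])).
- exact: nsNG.
by rewrite !pseries1 -(pcore_modp nsNG piN).
Qed.

End UpperSeries.

Section PSolvable.
Variables (gT : finGroupType) (p : nat).
Implicit Types G H K N : {group gT}.

Let p_step H K := (H <| K) && (p.-group (K / H) || p^'.-group (K / H)).

Lemma p_step_path_sub_last H s : path p_step H s -> H \subset last H s.
Proof.
elim: s H => //= K s IHs H /andP[/andP[/andP[sHK _] _] /IHs]; exact: subset_trans.
Qed.

Lemma pgroup_quotient_quotient pi H K N :
  H <| K -> K \subset 'N(N) -> pi.-group (K / H) -> pi.-group (K / N / (H / N)).
Proof.
move=> nsHK nNK; rewrite /pgroup !card_quotient ?normal_norm ?quotient_normal //.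
by apply: pnat_dvd; rewrite index_quotient // (subset_trans (subsetIl _ _) nNK).
Qed.

Lemma p_solvable_quotient G N : N <| G -> p_solvable p G -> p_solvable p (G / N)%G.
Proof.
move=> /normal_norm nNG [s [defG ps]].
have quo1 : (1 / N)%G = 1%G :> {group coset_of N} by apply: val_inj; apply: quotient1.
exists [seq (H / N)%G | H <- s]; rewrite -quo1 (last_map (fun H => H / N)%G) defG.
split=> //; move: nNG; rewrite -defG; elim: s 1%G ps {defG} => //= K s IHs H.
case/andP=> /andP[nsHK pK] ps nNs; rewrite IHs // andbT quotient_normal //=.
have nNK := subset_trans (p_step_path_sub_last ps) nNs.
by case/orP: pK => /pgroup_quotient_quotient-> //; rewrite orbT.
Qed.

Lemma p_solvable_pcore_neq1 G :
  p_solvable p G -> G :!=: 1 -> 'O_p(G) != 1 \/ 'O_p^'(G) != 1.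
Proof.
pose core_ntriv (X : {group gT}) := [|| X :==: 1, 'O_p(X) != 1 | 'O_p^'(X) != 1].
suff core_ntriv_last : forall s H,
    path p_step H s -> core_ntriv H -> core_ntriv (last H s).
  move=> [s [defG ps]] ntG; have := core_ntriv_last s 1%G ps.
  by rewrite /core_ntriv eqxx defG (negbTE ntG) => /(_ isT) /= /orP.
elim=> //= K s IHs H /andP[/andP[nsHK pK] ps] ntH; apply: IHs ps _.
have sOHK pi : 'O_pi(H) \subset 'O_pi(K).
  by rewrite -(pcore_setI_normal pi nsHK) subsetIl.
case/or3P: ntH => [/eqP H1 | ntOH | ntOH]; rewrite /core_ntriv.
- have [-> // | ntK] := eqsVneq K 1.
  rewrite H1 !pquotient_pgroup ?pgroup1 ?norms1 // in pK.
  by case/orP: pK => /pcore_pgroup_id->; rewrite ntK ?orbT.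
- by rewrite (subG1_contra (sOHK _) ntOH) orbT.
by rewrite (subG1_contra (sOHK _) ntOH) !orbT.
Qed.

End PSolvable.

Definition maximal_pnil_or_prime_index (gT : finGroupType) (p : nat)
    (G : {group gT}) :=
  forall M : {group gT}, maximal M G -> p_nilpotent p M \/ prime #|G : M|.

Section QuotientMaximal.
Variables (gT : finGroupType) (p : nat) (G N : {group gT}).

Lemma p_nilpotent_quotient (M : {group gT}) :
  M \subset 'N(N) -> p_nilpotent p M -> p_nilpotent p (M / N).
Proof.
move=> nNM [H [hallH nsHM]]; exists (H / N)%G; split; last exact: quotient_normal.
by rewrite quotient_pHall // (subset_trans (pHall_sub hallH) nNM).
Qed.

Lemma maximal_pnil_or_prime_index_quotient :
  N <| G -> maximal_pnil_or_prime_index p G ->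
  maximal_pnil_or_prime_index p (G / N)%G.
Proof.
move=> nsNG maxG Q maxQ; pose M := (coset N @*^-1 Q)%G.
have maxM : maximal M G by rewrite -(quotientGK nsNG) cosetpre_maximal.
have defQ : Q :=: M / N by rewrite cosetpreK.
have nNM : M \subset 'N(N).
  by case/maxgroupP: maxM => /andP[sMG _] _; rewrite (subset_trans sMG) ?normal_norm.
case: (maxG M maxM) => [pnilM | prGM].
  by left; rewrite defQ; apply: p_nilpotent_quotient.
by right; rewrite -index_cosetpre quotientGK.
Qed.

End QuotientMaximal.

Section FrattiniQuotient.
Variable gT : finGroupType.
Implicit Types G H K N : {group gT}.

Lemma coprime_complement_Frattini_arg G N K :
  solvable N -> K \subset 'N(N) -> coprime #|N| #|K| -> N * K <| G ->
  'N_G(K) * N = G.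
Proof.
move=> solN nNK coNK /andP[sNKG nNKG].
have sNG : N \subset G := subset_trans (mulG_subl K N) sNKG.
apply/eqP; rewrite eqEsubset mul_subG ?subsetIl //=; apply/subsetP=> g Gg.
have sKgNK : K :^ g \subset N * K by rewrite -(normsP nNKG g Gg) conjSg mulG_subr.
have [x Nx defKg] := SchurZassenhaus_trans_sol solN nNK sKgNK coNK (cardJg K g).
have -> : g = (g * x^-1) * x by rewrite mulgKV.
rewrite mem_mulg // inE groupM ?groupV ?(subsetP sNG x Nx) //=.
by apply/normP; rewrite conjsgM defKg conjsgK.
Qed.

Lemma Phi_nongen_mulg G H N :
  H \subset G -> N \subset 'Phi(G) -> H * N = G -> H :=: G.
Proof.
move=> sHG sNPhi defG; rewrite -(genGid H); apply: Phi_nongen.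
apply/eqP; rewrite eqEsubset join_subG Phi_sub sHG -{1}defG.
by rewrite mul_subG ?joing_subr // (subset_trans sNPhi) ?joing_subl.
Qed.

Lemma trivg_p'core_quotient_Phi (p : nat) G N :
  N <| G -> p.-group N -> N \subset 'Phi(G) ->
  'O_p^'(G) = 1 -> 'O_p^'(G / N) = 1.
Proof.
move=> nsNG pN sNPhi Op'1; have nNG := normal_norm nsNG.
pose L := (coset N @*^-1 'O_p^'(G / N))%G.
have nsLG : L <| G by have := cosetpre_pseries_normal [:: p^'] nsNG; rewrite pseries1.
have [sLG sNL] : L \subset G /\ N \subset L by rewrite normal_sub // sub_cosetpre.
have iLN : #|L : N| = #|'O_p^'(G / N)|.
  by rewrite -card_quotient ?cosetpreK // (subset_trans sLG nNG).
have coN_LN : coprime #|N| #|L : N|.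
  by rewrite iLN (pnat_coprime pN (pcore_pgroup _ _)).
have hallN : Hall L N by rewrite /Hall sNL.
have [K /complP[tiNK defL]] :=
  splitsP (SchurZassenhaus_split hallN (normalS sNL sLG nsNG)).
have oK : #|K| = #|L : N| by rewrite -defL indexMg -indexgI setIC tiNK indexg1.
have sKG : K \subset G by rewrite (subset_trans _ sLG) // -defL mulG_subr.
have nKG : G \subset 'N(K).
  have nsNKG : N * K <| G by rewrite defL.
  have coNK : coprime #|N| #|K| by rewrite oK.
  have defG := coprime_complement_Frattini_arg (pgroup_sol pN)
                 (subset_trans sKG nNG) coNK nsNKG.
  by rewrite -(Phi_nongen_mulg (subsetIl _ _) sNPhi defG) subsetIr.
have K1 : K :=: 1.
  apply/trivgP; rewrite -Op'1 pcore_max /normal ?sKG //.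
  by rewrite /pgroup oK iLN; apply: pcore_pgroup.
by apply/eqP; rewrite trivg_card1 -iLN -oK K1 cards1.
Qed.

End FrattiniQuotient.

Section MinimalNormalComplement.
Variable gT : finGroupType.
Implicit Types G M N : {group gT}.

Lemma notsub_Phi_maximal G N :
  N \subset G -> ~~ (N \subset 'Phi(G)) ->
  exists2 M : {group gT}, maximal M G & ~~ (N \subset M).
Proof.
move=> sNG nsNPhi.
suff /existsP[M /andP[]] : [exists M : {group gT}, maximal M G && ~~ (N \subset M)].
  by exists M.
apply: contraR nsNPhi; rewrite negb_exists => /forallP notsubN.
apply/bigcapsP=> M /predU1P[-> // | maxM].
by have := notsubN M; rewrite maxM negbK.
Qed.

Lemma minnormal_abelian_complement G N M :
  minnormal N G -> N \subset G -> abelian N -> maximal M G -> ~~ (N \subset M) ->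
  N * M = G /\ N :&: M = 1.
Proof.
move=> minN sNG abN maxM nsNM; have [/andP[_ nNG] minN'] := mingroupP minN.
have [/andP[sMG _] maxM'] := maxgroupP maxM.
have defG : N * M = G.
  rewrite -norm_joinEr ?(subset_trans sMG nNG) //.
  have sNM_G : N <*> M \subset G by rewrite join_subG sNG.
  have [// | prNM_G] := eqVproper sNM_G.
  by case/negP: nsNM; rewrite -(maxM' _ prNM_G (joing_subr N M)) joing_subl.
split=> //; apply/eqP; apply: contraR nsNM => ntNM.
have nNM_G : G \subset 'N(N :&: M).
  have nNMN : N \subset 'N(N :&: M) := sub_abelian_norm abN (subsetIl N M).
  by rewrite -defG mul_subG // normsI ?normG ?(subset_trans sMG nNG).
by rewrite -(minN' (N :&: M)%G) ?ntNM ?nNM_G ?subsetIl ?subsetIr.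
Qed.

End MinimalNormalComplement.

Section PNilpotentSupplement.
Variables (gT : finGroupType) (p : nat).
Implicit Types G M N : {group gT}.

Lemma pseries_p_nilpotent_supplement G N M :
  N <| G -> p.-group N -> N * M = G -> p_nilpotent p M ->
  pseries [:: (p : nat_pred); p^'; (p : nat_pred)] G = G.
Proof.
move=> nsNG pN defG [H [hallH nsHM]]; have [sNG nNG] := andP nsNG.
have [sHM p'H p'iMH] := and3P hallH.
have sMG : M \subset G by rewrite -defG mulG_subr.
have nNM := subset_trans sMG nNG.
have defNH : N <*> H = N * H := norm_joinEr (subset_trans sHM nNM).
have nsNH_G : N <*> H <| G.
  rewrite /normal join_subG sNG (subset_trans sHM sMG) -defG mul_subG //.
    exact: subset_trans (joing_subl N H) (normG _).
  by rewrite normsY // normal_norm.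
have sN : N \subset pseries [:: (p : nat_pred)] G by rewrite pseries1 pcore_max.
have sNH : N <*> H \subset pseries [:: (p : nat_pred); p^'] G.
  apply: (pseries_rcons_max (pis := [:: (p : nat_pred)])) sN _ nsNH_G _.
    exact: joing_subl.
  by rewrite /= defNH indexMg -indexgI (pnat_dvd (dvdn_indexg _ _) p'H).
apply/eqP; rewrite eqEsubset pseries_sub /=.
apply: (pseries_rcons_max (pis := [:: (p : nat_pred); p^'])) sNH _ (normal_refl G) _.
  exact: normal_sub nsNH_G.
have defG' : (N <*> H) * M = G by rewrite defNH -mulgA mulSGid.
rewrite -{1}defG' indexMg -indexgI -pnatNK (pnat_dvd _ p'iMH) // indexgS //.
by rewrite subsetI sHM joing_subr.
Qed.

End PNilpotentSupplement.

Section PrimeOrderMinimalNormal.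
Variables (gT : finGroupType) (p : nat).
Implicit Types G M N : {group gT}.

Lemma p'nat_index_cent_prime G N :
  N <| G -> p.-group N -> prime #|N| -> p^'.-nat #|G : 'C_G(N)|.
Proof.
move=> nsNG pN prN; have [P sylP] := Sylow_exists p G.
have ntN : N :!=: 1 by apply: contraTneq prN => ->; rewrite cards1.
have sNP : N \subset P by rewrite (subset_trans _ (pcore_sub_Hall sylP)) ?pcore_max.
have nsNP := normalS sNP (pHall_sub sylP) nsNG.
have sNZ : N \subset 'Z(P).
  have := meet_center_nil (pgroup_nil (pHall_pgroup sylP)) nsNP ntN.
  by apply: contraR => /(prime_TIg prN)->; rewrite eqxx.
have sPC : P \subset 'C_G(N).
  by rewrite subsetI (pHall_sub sylP) centsC (subset_trans sNZ) ?subsetIr.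
by apply: pnat_dvd (indexgS G sPC) _; case/and3P: sylP.
Qed.

(* C_G(N) = N * D with D := M :&: C_G(N) normal in G; the preimage X of
   O_p'(G/N) meets D in a normal p'-subgroup, so X :&: C_G(N) = N. *)
Lemma pgroup_cosetpre_pseries_cent G N M :
  N <| G -> p.-group N -> prime #|N| -> N * M = G -> N :&: M = 1 ->
  'O_p^'(G) = 1 ->
  p.-group (coset N @*^-1 pseries [:: p^'; (p : nat_pred)] (G / N) :&: 'C_G(N)).
Proof.
move=> nsNG pN prN defG tiNM Op'1; have [sNG nNG] := andP nsNG.
have sMG : M \subset G by rewrite -defG mulG_subr.
pose C := 'C_G(N)%G; pose D := (M :&: C)%G.
have nsCG : C <| G by rewrite /normal subsetIl normsI ?normG ?norms_cent.
have sNC : N \subset C by rewrite subsetI sNG; apply/cyclic_abelian/prime_cyclic.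
have defC : N * D = C by rewrite group_modl // defG (setIidPr (normal_sub nsCG)).
have nsDG : D <| G.
  rewrite /normal (subset_trans (subsetIl _ _) sMG) -defG mul_subG //.
    by rewrite cents_norm // centsC (subset_trans (subsetIr _ _) (subsetIr _ _)).
  by rewrite normsI ?normG ?(subset_trans sMG (normal_norm nsCG)).
pose X := (coset N @*^-1 pseries [:: p^'] (G / N))%G.
pose Y := (coset N @*^-1 pseries [:: p^'; (p : nat_pred)] (G / N))%G.
have nsXG : X <| G := cosetpre_pseries_normal _ nsNG.
have tiXD : X :&: D = 1.
  apply/trivgP; rewrite -Op'1 pcore_max ?(normalI nsXG nsDG) //.
  apply: (pgroup_setI_quotient (K := N)).
  - by rewrite (subset_trans _ nNG) // subIset ?(normal_sub nsXG).
  - suff -> : X :&: D :&: N = 1 by apply: pgroup1.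
    apply/trivgP; rewrite -tiNM subsetI subsetIr /= subIset //.
    by rewrite (subset_trans (subsetIr _ _)) ?subsetIl.
  apply: pgroupS (quotientS _ (subsetIl _ _)) _.
  by rewrite /= cosetpreK pseries1; apply: pcore_pgroup.
have tiXC : X :&: C = N.
  by rewrite -defC setIC -group_modl ?sub_cosetpre // setIC tiXD mulg1.
apply: (pgroup_setI_quotient (K := X)).
- by rewrite (subset_trans _ (normal_norm nsXG)) // subIset ?(normal_sub nsCG) ?orbT.
- have sXY : X \subset Y by rewrite morphpreS // (pseries_sub_catl [:: p^']).
  by rewrite setIAC (setIidPr sXY) tiXC.
apply: pgroupS (quotientS _ (subsetIl _ _)) _.
have nXY : Y \subset 'N(X).
  have nsYG : Y <| G := cosetpre_pseries_normal _ nsNG.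
  exact: subset_trans (normal_sub nsYG) (normal_norm nsXG).
by rewrite /pgroup card_quotient //; apply: (pnat_index_cosetpre_pseries [:: p^']).
Qed.

Lemma pseries_prime_complement G N M :
  N <| G -> p.-group N -> prime #|N| -> N * M = G -> N :&: M = 1 ->
  'O_p^'(G) = 1 ->
  pseries [:: p^'; (p : nat_pred); p^'; (p : nat_pred); p^'] (G / N) = G / N ->
  pseries [:: (p : nat_pred); p^'; (p : nat_pred); p^'] G = G.
Proof.
move=> nsNG pN prN defG tiNM Op'1 defGN.
pose Y := (coset N @*^-1 pseries [:: p^'; (p : nat_pred)] (G / N))%G.
pose Z := (coset N @*^-1 pseries [:: p^'; (p : nat_pred); p^'] (G / N))%G.
pose C := 'C_G(N)%G.
have nsCG : C <| G by rewrite /normal subsetIl normsI ?normG ?norms_cent ?normal_norm.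
have [nsYG nsZG] : Y <| G /\ Z <| G by split; apply: cosetpre_pseries_normal.
have pYC : p.-group (Y :&: C).
  exact: pgroup_cosetpre_pseries_cent nsNG pN prN defG tiNM Op'1.
have sYZ : Y \subset Z.
  by rewrite morphpreS // (pseries_sub_catl [:: p^'; (p : nat_pred)]).
have sZ : Z \subset pseries [:: (p : nat_pred); p^'] G.
  apply: (pseries_rcons_max (pis := [:: (p : nat_pred)]) (A := (Y :&: C)%G)).
  - by rewrite pseries1; apply: pcore_max pYC (normalI nsYG nsCG).
  - exact: subset_trans (subsetIl _ _) sYZ.
  - exact: nsZG.
  rewrite -(Lagrange_index sYZ (subsetIl Y C)) pnatM.
  rewrite (pnat_index_cosetpre_pseries [:: p^'; (p : nat_pred)]) /= indexgI.
  apply: pnat_dvd (dvdn_index_normal nsCG (normal_sub nsYG)) _.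
  exact: p'nat_index_cent_prime.
exact: (pseries_quotient_lift (s := [:: p^'; (p : nat_pred); p^'])
          (pis := [:: (p : nat_pred); p^']) nsNG sZ defGN).
Qed.

End PrimeOrderMinimalNormal.

Lemma pseries_p_p'_p_p'_minnormal (gT : finGroupType) (p : nat) (G N : {group gT}) :
  minnormal N G -> N \subset 'O_p(G) -> 'O_p^'(G) = 1 ->
  maximal_pnil_or_prime_index p G ->
  pseries [:: p^'; (p : nat_pred); p^'; (p : nat_pred); p^'] (G / N) = G / N ->
  pseries [:: (p : nat_pred); p^'; (p : nat_pred); p^'] G = G.
Proof.
move=> minN sNOp Op'1 maxG defGN.
have pN : p.-group N := pgroupS sNOp (pcore_pgroup _ _).
have sNG : N \subset G := subset_trans sNOp (pcore_sub _ _).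
have nsNG : N <| G by rewrite /normal sNG; case/mingroupP: minN => /andP[].
have [sNPhi | /(notsub_Phi_maximal sNG)[M maxM nsNM]] := boolP (N \subset 'Phi(G)).
  apply: (pseries_quotient_pgroup_lift nsNG pN).
  by rewrite -(pseries_pop _ (trivg_p'core_quotient_Phi nsNG pN sNPhi Op'1)).
have abN : abelian N.
  have [_ _ /is_abelemP[q _ /abelem_abelian //]] :=
    minnormal_solvable minN (subxx N) (pgroup_sol pN).
have [defG tiNM] := minnormal_abelian_complement minN sNG abN maxM nsNM.
case: (maxG M maxM) => [pnilM | prGM].
  apply/eqP; rewrite eqEsubset pseries_sub /=.
  rewrite -{1}(pseries_p_nilpotent_supplement nsNG pN defG pnilM).
  exact: (pseries_sub_catl [:: (p : nat_pred); p^'; (p : nat_pred)] [:: p^']).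
have iGM : #|G : M| = #|N| by rewrite -divgS -defG ?mulG_subr // TI_cardMg // mulnK.
by apply: pseries_prime_complement nsNG pN _ defG tiNM Op'1 defGN; rewrite -iGM.
Qed.

Theorem pseries_p'_p_p'_p_p'_id (gT : finGroupType) (p : nat) (G : {group gT}) :
  p_solvable p G -> maximal_pnil_or_prime_index p G ->
  pseries [:: p^'; (p : nat_pred); p^'; (p : nat_pred); p^'] G = G.
Proof.
have [n] := ubnP #|G|; elim: n gT G => // n IHn gT G /ltnSE-leGn psolG maxG.
have IHquo (N : {group gT}) : N <| G -> N :!=: 1 ->
    pseries [:: p^'; (p : nat_pred); p^'; (p : nat_pred); p^'] (G / N) = G / N.
  move=> nsNG ntN; apply: IHn.
  - exact: leq_trans (ltn_quotient ntN (normal_sub nsNG)) leGn.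
  - exact: p_solvable_quotient.
  exact: maximal_pnil_or_prime_index_quotient.
have [G1 | ntG] := eqsVneq G 1.
  by apply/eqP; rewrite eqEsubset pseries_sub G1 sub1G.
have [Op'1 | ntOp'] := eqVneq 'O_p^'(G) 1; last first.
  apply: pseries_quotient_pgroup_lift (pcore_normal _ _) (pcore_pgroup _ _) _.
  exact: IHquo (pcore_normal _ _) ntOp'.
have ntOp : 'O_p(G) != 1.
  by case: (p_solvable_pcore_neq1 psolG ntG); rewrite ?Op'1 ?eqxx.
have [N minN sNOp] := minnormal_exists ntOp (gFnorm _ G).
have [/andP[ntN nNG] _] := mingroupP minN.
have nsNG : N <| G by rewrite /normal (subset_trans sNOp (pcore_sub _ _)).
rewrite pseries_pop //.
exact: pseries_p_p'_p_p'_minnormal minN sNOp Op'1 maxG (IHquo N nsNG ntN).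
Qed.

Theorem theoremD (gT : finGroupType) (p : nat) (G : {group gT}) :
  prime p -> odd p -> p_solvable p G ->
  (forall M : {group gT}, maximal M G -> p_nilpotent p M \/ prime #|G : M|) ->
  useries [:: p^'; (p : nat_pred); p^'; (p : nat_pred); p^'] G = G.
Proof.
by move=> _ _ psolG maxG; rewrite useries_pseries pseries_p'_p_p'_p_p'_id.
Qed.
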